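(* Let $k$ be a field, $X,Y$ indeterminates, $M=Yk(X)[[Y]]$ and $R=k+M$. Then $R$ is integrally closed, but $R$ does not have the finite $t$-basic ideal property: for the finitely generated ideal $I=Y(k+kX+M)=(Y,XY)R$ and $J=YR\subseteq I$, one has $(JI)_t=(I^2)_t$ while $J_t=YR\ne M=I_t$.
   Context: For a domain $R$ with quotient field $K$ and nonzero fractional ideal $I$: $I^{-1}=(R:I)=\{x\in K:xI\subseteq R\}$, $I_v=(I^{-1})^{-1}$, $I_t=\bigcup J_v$ over finitely generated subideals $J\subseteq I$. For a nonzero ideal $I$, an ideal $J\subseteq I$ is a $t$-reduction of $I$ if $(JI^n)_t=(I^{n+1})_t$ for some integer $n\ge0$; $I$ is $t$-basic if every $t$-reduction $J$ of $I$ satisfies $J_t=I_t$. The finite $t$-basic ideal property means every nonzero finitely generated ideal is $t$-basic. *)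

From HB Require Import structures.
From mathcomp Require Import all_boot all_order all_algebra.
From mathcomp Require Import fraction.
From Stdlib Require List.

Set Implicit Arguments. Unset Strict Implicit. Unset Printing Implicit Defensive.
Import GRing.Theory.
Local Open Scope ring_scope.

(* Generic part: an ambient "field" K (only its operations are used)   *)
Record rawRing := RawRing {
  rcarrier :> Type;
  radd : rcarrier -> rcarrier -> rcarrier;
  rmul : rcarrier -> rcarrier -> rcarrier;
  rzero : rcarrier;
  rone : rcarrier }.

Section StarOps.
Variables (K : rawRing) (R : K -> Prop).

Definition subsetK (A B : K -> Prop) := forall x, A x -> B x.
Definition eqsetK (A B : K -> Prop) := forall x, A x <-> B x.

Definition is_ideal (I : K -> Prop) :=
  [/\ subsetK I R, I (rzero K),
      (forall x y, I x -> I y -> I (radd x y)) &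
      (forall r x, R r -> I x -> I (rmul r x))].

Definition nonzero_set (I : K -> Prop) := exists x, I x /\ x <> rzero K.

Fixpoint Rspan (s : list K) (x : K) : Prop :=
  match s with
  | nil => x = rzero K
  | a :: s' => exists r y, R r /\ Rspan s' y /\ x = radd (rmul r a) y
  end.

Definition fingen (J : K -> Prop) := exists s : list K, eqsetK J (Rspan s).

Definition colon (I : K -> Prop) : K -> Prop :=
  fun x => forall i, I i -> R (rmul x i).
Definition inv_ideal (I : K -> Prop) := colon I.
Definition vcl (I : K -> Prop) : K -> Prop := colon (colon I).
Definition tcl (I : K -> Prop) : K -> Prop :=
  fun x => exists J, [/\ fingen J, subsetK J I & vcl J x].

Inductive fsum (P : K -> Prop) : K -> Prop :=
  | fsum0 : fsum P (rzero K)
  | fsumS a y : P a -> fsum P y -> fsum P (radd a y).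

Definition prodI (I J : K -> Prop) : K -> Prop :=
  fsum (fun z => exists a b, [/\ I a, J b & z = rmul a b]).

Fixpoint powI (I : K -> Prop) (n : nat) : K -> Prop :=
  match n with
  | O => R
  | S n' => prodI (powI I n') I
  end.

Definition t_reduction (J I : K -> Prop) :=
  is_ideal J /\ subsetK J I /\
  exists n : nat, eqsetK (tcl (prodI J (powI I n))) (tcl (powI I n.+1)).

Definition t_basic (I : K -> Prop) :=
  forall J, t_reduction J I -> eqsetK (tcl J) (tcl I).

Definition finite_t_basic_property :=
  forall I, is_ideal I -> nonzero_set I -> fingen I -> t_basic I.

(* value at x of the monic polynomial X^n + c_{n-1} X^{n-1} + ... + c_0,
   where cs = [c_0; ...; c_{n-1}] (Horner scheme) *)
Definition monic_eval (cs : list K) (x : K) : K :=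
  foldr (fun c acc => radd c (rmul x acc)) (rone K) cs.

Definition integral_over (x : K) :=
  exists cs : list K, (forall c, List.In c cs -> R c) /\ monic_eval cs x = rzero K.

Definition integrally_closed := forall x : K, integral_over x -> R x.

End StarOps.

Section Series.
Variable F : fieldType.

Definition ps := nat -> F.
Definition ps_add (a b : ps) : ps := fun n => a n + b n.
Definition ps_mul (a b : ps) : ps :=
  fun n => \sum_(i < n.+1) a i * b (n - i)%N.
Definition ps_shift (a : ps) : ps := fun n => a n.+1.           (* a / Y, when a 0 = 0 *)
Definition ps_Ypow (m : nat) (a : ps) : ps :=
  fun n => if (m <= n)%N then a (n - m)%N else 0.
Definition ps_const (c : F) : ps := fun n => if n == 0%N then c else 0.

(* Laurent series a / Y^n, in normal form: n = 0 or a(0) <> 0 *)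
Record laur := Laur {
  lden : nat;
  lnum : ps;
  lnormal : (lden == 0%N) || (lnum 0%N != 0) }.

Fixpoint normp (n : nat) (a : ps) : nat * ps :=
  match n with
  | O => (O, a)
  | S n' => if a 0%N == 0 then normp n' (ps_shift a) else (S n', a)
  end.

Lemma normp_ok n a : ((normp n a).1 == 0%N) || ((normp n a).2 0%N != 0).
Proof.
elim: n a => [|n IH] a //=.
by case: ifP => [_|->]; [apply: IH | rewrite orbT].
Qed.

Definition mkL (n : nat) (a : ps) : laur := Laur (normp_ok n a).

Definition laur_add (x y : laur) : laur :=
  mkL (lden x + lden y) (ps_add (ps_Ypow (lden y) (lnum x)) (ps_Ypow (lden x) (lnum y))).
Definition laur_mul (x y : laur) : laur :=
  mkL (lden x + lden y) (ps_mul (lnum x) (lnum y)).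
Definition of_ps (a : ps) : laur := mkL 0 a.
Definition laur0 : laur := of_ps (ps_const 0).
Definition laur1 : laur := of_ps (ps_const 1).

Definition LaurRing : rawRing := RawRing laur_add laur_mul laur0 laur1.

Definition laurC (c : F) : laur := of_ps (ps_const c).
Definition laurY : laur := of_ps (fun n => if n == 1%N then 1 else 0).

Definition in_ps (x : laur) := lden x = 0%N.
Definition in_YPS (x : laur) := lden x = 0%N /\ lnum x 0%N = 0.
End Series.

Unset Implicit Arguments.
Definition ratfun (k : fieldType) := {fraction {poly k}}.
Definition rfC (k : fieldType) (c : k) : ratfun k := @FracField.tofrac _ (c%:P).
Definition rfX (k : fieldType) : ratfun k := @FracField.tofrac _ 'X.

Definition KK (k : fieldType) : rawRing := LaurRing (ratfun k).

Definition MM (k : fieldType) : KK k -> Prop := @in_YPS (ratfun k).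

Definition RR (k : fieldType) : KK k -> Prop :=
  fun x => lden x = 0%N /\ exists c : k, lnum x 0%N = rfC k c.

Definition YY (k : fieldType) : KK k := laurY (ratfun k).
Definition XX (k : fieldType) : KK k := laurC (rfX k).
Definition cK (k : fieldType) (c : k) : KK k := laurC (rfC k c).

Definition II (k : fieldType) : KK k -> Prop :=
  fun z => exists (a b : k) (m : KK k), MM k m /\
    z = laur_mul (YY k) (laur_add (laur_add (cK k a) (laur_mul (cK k b) (XX k))) m).

Definition JJ (k : fieldType) : KK k -> Prop :=
  fun z => exists r, RR k r /\ z = laur_mul (YY k) r.

(* A rational function that is a root of a monic polynomial over k lies in k[X],
   since k[X] is integrally closed, and then has degree 0; a Laurent series of
   negative Y-order is not a root of a monic polynomial over k(X)[[Y]].  Reading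
   a monic equation off at the constant term, R = k + M is integrally closed.

   The t-closures all come from one observation: an element r of R with X r in R
   lies in M, because X is not in k.  Hence if (a, Xa) <= A <= a k(X)[[Y]] then
   A_t = a k(X)[[Y]], the colon ideal (R : A) containing Y/a and XY/a.  This gives
   I_t = M and (JI)_t = (I^2)_t = Y^2 k(X)[[Y]], while J = YR is principal hence
   t-closed, and XY is in M but not in J.  So J is a t-reduction of I with
   J_t <> I_t. *)

From HB Require Import structures.
From mathcomp Require Import all_boot all_order all_algebra.
From mathcomp Require Import fraction generic_quotient boolp.
From mathcomp Require Import ring zify.
Set Implicit Arguments. Unset Strict Implicit. Unset Printing Implicit Defensive.
Import GRing.Theory.
Local Open Scope ring_scope.

Section PowerSeries.
Variable F : fieldType.
Local Notation ps := (ps F).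

Lemma ps_ext (a b : ps) : (forall n, a n = b n) -> a = b.
Proof. by move=> h; apply: funext. Qed.

(* The ring laws of [ps] are transported from {poly F}: the coefficients of
   index at most n of a sum or product only involve coefficients of index at
   most n of the operands. *)
Definition ps_trunc n (a : ps) : {poly F} := \poly_(i < n.+1) a i.
Definition ps_approx n (P : {poly F}) (a : ps) := forall m, (m <= n)%N -> P`_m = a m.

Lemma ps_approx_trunc n a : ps_approx n (ps_trunc n a) a.
Proof. by move=> m hm; rewrite coef_poly ltnS hm. Qed.

Lemma ps_approxD n P Q a b :
  ps_approx n P a -> ps_approx n Q b -> ps_approx n (P + Q) (ps_add a b).
Proof. by move=> hP hQ m hm; rewrite coefD hP // hQ. Qed.

Lemma ps_approxM n P Q a b :
  ps_approx n P a -> ps_approx n Q b -> ps_approx n (P * Q) (ps_mul a b).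
Proof.
move=> hP hQ m hm; rewrite coefM /ps_mul; apply: eq_bigr => i _.
have hi : (i <= n)%N by rewrite (leq_trans _ hm) // -ltnS.
by rewrite hP // hQ // (leq_trans (leq_subr _ _) hm).
Qed.

Lemma ps_approxC n c : ps_approx n c%:P (ps_const c).
Proof. by move=> m _; rewrite coefC. Qed.

Lemma ps_approx_uniq n P a b : ps_approx n P a -> ps_approx n P b -> a n = b n.
Proof. by move=> ha hb; rewrite -ha // hb. Qed.

Local Hint Resolve ps_approx_trunc : core.

Lemma ps_addA : associative (@ps_add F).
Proof. by move=> a b c; apply: ps_ext => n; rewrite /ps_add addrA. Qed.
Lemma ps_addC : commutative (@ps_add F).
Proof. by move=> a b; apply: ps_ext => n; rewrite /ps_add addrC. Qed.
Lemma ps_add0 : left_id (fun=> 0) (@ps_add F).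
Proof. by move=> a; apply: ps_ext => n; rewrite /ps_add add0r. Qed.
Lemma ps_addN : left_inverse (fun=> 0) (fun a n => - a n) (@ps_add F).
Proof. by move=> a; apply: ps_ext => n; rewrite /ps_add addNr. Qed.

HB.instance Definition _ := gen_eqMixin ps.
HB.instance Definition _ := gen_choiceMixin ps.
HB.instance Definition _ := GRing.isZmodule.Build ps ps_addA ps_addC ps_add0 ps_addN.

Lemma ps_mulA : associative (@ps_mul F).
Proof.
move=> a b c; apply: ps_ext => n.
apply: (@ps_approx_uniq n (ps_trunc n a * ps_trunc n b * ps_trunc n c)).
  by rewrite -mulrA; do 2![apply: ps_approxM => //].
by do 2![apply: ps_approxM => //].
Qed.

Lemma ps_mulC : commutative (@ps_mul F).
Proof.
move=> a b; apply: ps_ext => n.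
apply: (@ps_approx_uniq n (ps_trunc n a * ps_trunc n b)); first exact: ps_approxM.
by rewrite mulrC; apply: ps_approxM.
Qed.

Lemma ps_mul1 : left_id (ps_const 1) (@ps_mul F).
Proof.
move=> a; apply: ps_ext => n.
apply: (@ps_approx_uniq n (1%:P * ps_trunc n a)).
  by apply: ps_approxM => //; apply: ps_approxC.
by rewrite mul1r.
Qed.

Lemma ps_mulDl : left_distributive (@ps_mul F) (@ps_add F).
Proof.
move=> a b c; apply: ps_ext => n.
apply: (@ps_approx_uniq n ((ps_trunc n a + ps_trunc n b) * ps_trunc n c)).
  by apply: ps_approxM => //; apply: ps_approxD.
by rewrite mulrDl; apply: ps_approxD; apply: ps_approxM.
Qed.

Lemma ps_oner_neq0 : ps_const 1 != (fun=> 0) :> ps.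
Proof. by apply/negP => /eqP/(congr1 (fun f => f 0%N))/eqP; rewrite oner_eq0. Qed.

HB.instance Definition _ :=
  GRing.Zmodule_isComNzRing.Build ps ps_mulA ps_mulC ps_mul1 ps_mulDl ps_oner_neq0.

Lemma ps_const0 : ps_const 0 = 0 :> ps.
Proof. by apply: ps_ext => -[]. Qed.

Lemma ps_coef0M (a b : ps) : (a * b) 0%N = a 0%N * b 0%N.
Proof. by rewrite /GRing.mul /= /ps_mul big_ord1. Qed.

Definition psY : ps := fun n => if n == 1%N then 1 else 0.

Lemma coef_psYXnM j (b : ps) n : (psY ^+ j * b) n = if (j <= n)%N then b (n - j)%N else 0.
Proof.
have approxY : ps_approx n 'X psY by move=> m _; rewrite coefX /psY; case: eqP.
have approxYXn : ps_approx n 'X^j (psY ^+ j).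
  elim: j => [|j IH]; first exact: ps_approxC.
  by rewrite !exprS; apply: ps_approxM.
change ((psY ^+ j * b) n = ps_Ypow j b n).
apply: (@ps_approx_uniq n ('X^j * ps_trunc n b)); first exact: ps_approxM.
move=> m hm; rewrite coefXnM /ps_Ypow; case: ltnP => // _.
by rewrite ps_approx_trunc // (leq_trans (leq_subr _ _) hm).
Qed.

Lemma ps_YpowE j (a : ps) : ps_Ypow j a = psY ^+ j * a.
Proof. by apply: ps_ext => n; rewrite coef_psYXnM. Qed.

Lemma ps_shiftK (a : ps) : a 0%N = 0 -> psY * ps_shift a = a.
Proof.
by move=> a0; apply: ps_ext => -[|n]; rewrite -[psY]expr1 coef_psYXnM //= subn1.
Qed.

End PowerSeries.

Section LaurentSeries.
Variable F : fieldType.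
Local Notation ps := (ps F).
Local Notation laur := (laur F).
Local Notation psY := (psY F).

Lemma laur_eq (x y : laur) : lden x = lden y -> lnum x = lnum y -> x = y.
Proof.
case: x => dx ax hx; case: y => dy ay hy /= edx eax; subst.
by rewrite (bool_irrelevance hx hy).
Qed.

Lemma normpP n (a : ps) :
  ((normp n a).1 <= n)%N /\ a = psY ^+ (n - (normp n a).1) * (normp n a).2.
Proof.
elim: n a => [|n IH] a /=; first by rewrite expr0 mul1r.
case: ifP => [/eqP a0|_] /=; last by rewrite subnn expr0 mul1r.
have [h1 h2] := IH (ps_shift a); split; first exact: leq_trans h1 _.
by rewrite -{1}(ps_shiftK a0) {1}h2 mulrA -exprS subSn.
Qed.

Lemma lden_mkL n (a : ps) : (lden (mkL n a) <= n)%N.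
Proof. by have [] := normpP n a. Qed.

(* [Y^N x] as a power series, meaningful when [lden x <= N]: identities between
   Laurent series are proved on these numerators. *)
Definition laur_scale N (x : laur) : ps := psY ^+ (N - lden x) * lnum x.

Lemma laur_scale_mkL N n (a : ps) :
  (n <= N)%N -> laur_scale N (mkL n a) = psY ^+ (N - n) * a.
Proof.
move=> hn; rewrite /laur_scale /=; have [h1 h2] := normpP n a.
by rewrite [in RHS]h2 mulrA -exprD; congr (_ ^+ _ * _); lia.
Qed.

Lemma laur_scale_inj N (x y : laur) : (lden x <= N)%N -> (lden y <= N)%N ->
  laur_scale N x = laur_scale N y -> x = y.
Proof.
wlog hxy : x y / (lden x <= lden y)%N.
  move=> W hx hy e; case: (leqP (lden x) (lden y)) => h; first exact: W.
  by symmetry; apply: W => //; apply: ltnW.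
move=> hx hy e.
have edl : lden x = lden y.
  apply/eqP; rewrite eqn_leq hxy leqNgt; apply/negP => hlt.
  have hy0 : lnum y 0%N != 0.
    by have := lnormal y; rewrite (gtn_eqF (leq_ltn_trans (leq0n _) hlt)).
  move/(congr1 (fun f => f (N - lden y)%N)): e.
  rewrite /laur_scale !coef_psYXnM leqnn subnn.
  have -> : (N - lden x <= N - lden y)%N = false.
    by apply/negbTE; rewrite -ltnNge; apply: ltn_sub2l => //; exact: leq_trans hlt hy.
  by move=> h; move: hy0; rewrite -h eqxx.
apply: laur_eq => //; apply: ps_ext => m.
move/(congr1 (fun f => f (m + (N - lden x))%N)): e.
by rewrite /laur_scale !coef_psYXnM -edl leq_addl addnK.
Qed.

Lemma laur_scale_shift N j (x : laur) :
  (lden x <= N)%N -> laur_scale (N + j) x = psY ^+ j * laur_scale N x.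
Proof. by move=> h; rewrite /laur_scale mulrA -exprD; congr (_ ^+ _ * _); lia. Qed.

Lemma laur_scaleD N (x y : laur) : (lden x + lden y <= N)%N ->
  laur_scale N (laur_add x y) = laur_scale N x + laur_scale N y.
Proof.
move=> h; rewrite /laur_add laur_scale_mkL // !ps_YpowE mulrDr !mulrA -!exprD.
by rewrite /laur_scale; congr (_ ^+ _ * _ + _ ^+ _ * _); lia.
Qed.

Lemma laur_scaleM N M (x y : laur) : (lden x <= N)%N -> (lden y <= M)%N ->
  laur_scale (N + M) (laur_mul x y) = laur_scale N x * laur_scale M y.
Proof.
move=> hx hy; rewrite /laur_mul laur_scale_mkL ?leq_add // /laur_scale.
by rewrite mulrACA -exprD; congr (_ ^+ _ * _); lia.
Qed.

Lemma laur_opp_normal (x : laur) : (lden x == 0%N) || ((fun n => - lnum x n) 0%N != 0).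
Proof. by rewrite oppr_eq0; exact: lnormal x. Qed.

Definition laur_opp (x : laur) : laur := Laur (laur_opp_normal x).

Lemma laur_scaleN N (x : laur) : laur_scale N (laur_opp x) = - laur_scale N x.
Proof. by rewrite /laur_scale -mulrN. Qed.

Lemma laur_scale0 N : laur_scale N (laur0 F) = 0.
Proof. by rewrite /laur0 /of_ps laur_scale_mkL // ps_const0 mulr0. Qed.

Lemma laur_scale1 N : laur_scale N (laur1 F) = psY ^+ N.
Proof. by rewrite /laur1 /of_ps laur_scale_mkL // mulr1 subn0. Qed.

Lemma lden_add (x y : laur) : (lden (laur_add x y) <= lden x + lden y)%N.
Proof. exact: lden_mkL. Qed.
Lemma lden_mul (x y : laur) : (lden (laur_mul x y) <= lden x + lden y)%N.
Proof. exact: lden_mkL. Qed.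

Lemma laur_addA : associative (@laur_add F).
Proof.
move=> x y z; pose N := (lden x + lden y + lden z)%N.
have := lden_add x y; have := lden_add y z.
have := lden_add x (laur_add y z); have := lden_add (laur_add x y) z => *.
apply: (@laur_scale_inj N); rewrite /N; [lia|lia|].
rewrite !laur_scaleD ?addrA //; lia.
Qed.

Lemma laur_addC : commutative (@laur_add F).
Proof.
move=> x y; have := lden_add x y; have := lden_add y x => *.
apply: (@laur_scale_inj (lden x + lden y)); [lia|lia|].
rewrite !laur_scaleD; [exact: addrC|lia|lia].
Qed.

Lemma laur_add0 : left_id (laur0 F) (@laur_add F).
Proof.
move=> x; have := lden_add (laur0 F) x => h.
apply: (@laur_scale_inj (lden x)); [exact: h|by []|].
by rewrite laur_scaleD // laur_scale0 add0r.
Qed.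

Lemma laur_addN : left_inverse (laur0 F) laur_opp (@laur_add F).
Proof.
move=> x; have := lden_add (laur_opp x) x => h.
apply: (@laur_scale_inj (lden x + lden x)); [exact: h|by []|].
by rewrite laur_scaleD // laur_scale0 laur_scaleN addNr.
Qed.

HB.instance Definition _ := gen_eqMixin laur.
HB.instance Definition _ := gen_choiceMixin laur.
HB.instance Definition _ :=
  GRing.isZmodule.Build laur laur_addA laur_addC laur_add0 laur_addN.

Lemma laur_mulA : associative (@laur_mul F).
Proof.
move=> x y z; pose N := (lden x + lden y + lden z)%N.
have := lden_mul x y; have := lden_mul y z.
have := lden_mul x (laur_mul y z); have := lden_mul (laur_mul x y) z => *.
apply: (@laur_scale_inj (N + N + N)); rewrite /N; [lia|lia|].
rewrite -{1}addnA !laur_scaleM ?mulrA //; lia.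
Qed.

Lemma laur_mulC : commutative (@laur_mul F).
Proof.
move=> x y; pose N := (lden x + lden y)%N.
have := lden_mul x y; have := lden_mul y x => *.
apply: (@laur_scale_inj (N + N)); rewrite /N; [lia|lia|].
rewrite !laur_scaleM; [exact: mulrC|lia..].
Qed.

Lemma laur_mul1 : left_id (laur1 F) (@laur_mul F).
Proof.
move=> x; have := lden_mul (laur1 F) x => h.
apply: (@laur_scale_inj (0 + lden x)); [exact: h|by []|].
by rewrite laur_scaleM // laur_scale1 expr0 mul1r.
Qed.

Lemma laur_mulDl : left_distributive (@laur_mul F) (@laur_add F).
Proof.
move=> x y z; pose N := (lden x + lden y + lden z)%N.
have := lden_add x y; have := lden_mul x z; have := lden_mul y z.
have := lden_mul (laur_add x y) z.
have := lden_add (laur_mul x z) (laur_mul y z) => *.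
apply: (@laur_scale_inj (N + N + (N + N))); rewrite /N; [lia|lia|].
rewrite laur_scaleD; last lia.
rewrite !(@laur_scale_shift (N + N) (N + N)); try lia.
by rewrite !laur_scaleM ?laur_scaleD -?mulrDr ?mulrDl //; lia.
Qed.

Lemma laur_oner_neq0 : laur1 F != laur0 F.
Proof.
by apply/negP => /eqP/(congr1 (fun x : laur => lnum x 0%N))/eqP; rewrite oner_eq0.
Qed.

HB.instance Definition _ := GRing.Zmodule_isComNzRing.Build
  laur laur_mulA laur_mulC laur_mul1 laur_mulDl laur_oner_neq0.

End LaurentSeries.

Section LaurentSeriesValuation.
Variable F : fieldType.
Local Notation ps := (ps F).
Local Notation laur := (laur F).
Local Notation psY := (psY F).
Local Notation Y := (laurY F).

Lemma of_psK (x : laur) : in_ps x -> of_ps (lnum x) = x.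
Proof. by move=> h; apply: laur_eq. Qed.

Lemma of_psD (a b : ps) : of_ps a + of_ps b = of_ps (a + b).
Proof. by apply: laur_eq => //=; rewrite !ps_YpowE !expr0 !mul1r. Qed.

Lemma of_psM (a b : ps) : of_ps a * of_ps b = of_ps (a * b).
Proof. by apply: laur_eq. Qed.

Lemma laurYE : Y = of_ps psY.
Proof. by []. Qed.

Lemma in_psD (x y : laur) : in_ps x -> in_ps y -> in_ps (x + y).
Proof. by move=> /of_psK <- /of_psK <-; rewrite of_psD. Qed.

Lemma in_psM (x y : laur) : in_ps x -> in_ps y -> in_ps (x * y).
Proof. by move=> /of_psK <- /of_psK <-; rewrite of_psM. Qed.

Lemma lnum0D (x y : laur) : in_ps x -> in_ps y ->
  lnum (x + y) 0%N = lnum x 0%N + lnum y 0%N.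
Proof. by move=> /of_psK <- /of_psK <-; rewrite of_psD. Qed.

Lemma lnum0M (x y : laur) : in_ps x -> in_ps y ->
  lnum (x * y) 0%N = lnum x 0%N * lnum y 0%N.
Proof. by move=> /of_psK <- /of_psK <-; rewrite of_psM /= ps_coef0M. Qed.

Lemma in_YPSD (x y : laur) : in_YPS x -> in_YPS y -> in_YPS (x + y).
Proof. by move=> [hx x0] [hy y0]; split; [apply: in_psD|rewrite lnum0D // x0 y0 addr0]. Qed.

Lemma in_YPSMr (x w : laur) : in_YPS x -> in_ps w -> in_YPS (x * w).
Proof. by move=> [hx x0] hw; split; [apply: in_psM|rewrite lnum0M // x0 mul0r]. Qed.

Lemma in_YPS_mulY (w : laur) : in_ps w -> in_YPS (Y * w).
Proof. by move=> hw; split; [exact: in_psM|rewrite lnum0M //; exact: mul0r]. Qed.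

Lemma in_YPS_mulYP (x : laur) : in_YPS x -> exists2 w, in_ps w & x = Y * w.
Proof.
move=> [hx x0]; exists (of_ps (ps_shift (lnum x))) => //.
by rewrite laurYE of_psM ps_shiftK // of_psK.
Qed.

Definition laurYinv : laur := @Laur F 1 (ps_const 1) (introT orP (or_intror (oner_neq0 F))).

Lemma mulYinvY : laurYinv * Y = 1.
Proof.
have h := lden_mul laurYinv Y.
apply: (@laur_scale_inj _ 1); [exact: h|by []|].
rewrite laur_scale1 -[X in laur_scale X]/(1 + 0)%N laur_scaleM //.
by rewrite /laur_scale !subnn !expr0 !mul1r expr1.
Qed.

Lemma laurY_mulI : injective (fun x : laur => Y * x).
Proof. by move=> x y /(congr1 (fun z => laurYinv * z)); rewrite !mulrA mulYinvY !mul1r. Qed.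

Lemma laurY_neq0 : Y != 0.
Proof. by apply: contra_neq (oner_neq0 laur) => Y0; rewrite -mulYinvY Y0 mulr0. Qed.

Lemma mkL_id n (a : ps) : a 0%N != 0 -> lden (mkL n a) = n /\ lnum (mkL n a) = a.
Proof. by case: n => [|n] //= h; rewrite (negbTE h). Qed.

Lemma lnum0_add_neg (c y : laur) : in_ps c -> (0 < lden y)%N ->
  lnum (c + y) 0%N = lnum y 0%N.
Proof.
move=> hc hy; have y0 : lnum y 0%N != 0 by have := lnormal y; rewrite (gtn_eqF hy).
change (lnum (mkL (lden c + lden y)
  (ps_add (ps_Ypow (lden y) (lnum c)) (ps_Ypow (lden c) (lnum y)))) 0%N = lnum y 0%N).
have sum0 : ps_add (ps_Ypow (lden y) (lnum c)) (ps_Ypow (lden c) (lnum y)) 0%N = lnum y 0%N.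
  by rewrite /ps_add /ps_Ypow hc leqNgt hy add0r.
by rewrite -sum0 in y0 *; have [_ ->] := mkL_id (lden c + lden y) y0.
Qed.

(* A product [x h] with [lden x > 0] and [lnum h 0 != 0] has negative order;
   adding an element of F[[Y]] keeps its leading coefficient. *)
Lemma lnum0_addM (c x h : laur) : in_ps c -> (0 < lden x)%N -> lnum h 0%N != 0 ->
  lnum (c + x * h) 0%N != 0.
Proof.
move=> hc hx h0; have x0 : lnum x 0%N != 0 by have := lnormal x; rewrite (gtn_eqF hx).
have xh0 : (lnum x * lnum h) 0%N != 0 by rewrite ps_coef0M mulf_neq0.
have [xh_den xh_num] := mkL_id (lden x + lden h) xh0.
have -> : x * h = mkL (lden x + lden h) (lnum x * lnum h) by [].
by rewrite lnum0_add_neg // ?xh_num ?xh_den // (leq_trans hx) ?leq_addr.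
Qed.

Lemma monic_eval_neq0 (cs : seq laur) (x : laur) : (0 < lden x)%N ->
  (forall c, List.In c cs -> in_ps c) -> @monic_eval (LaurRing F) cs x != 0.
Proof.
move=> hx hcs; suff nz : lnum (@monic_eval (LaurRing F) cs x) 0%N != 0.
  by apply: contraNneq nz => ->.
elim: cs hcs => [|c cs IH] hcs; first exact: oner_neq0.
apply: lnum0_addM; [by apply: hcs; left|exact: hx|].
by apply: IH => c' hc'; apply: hcs; right.
Qed.

End LaurentSeriesValuation.

Section StarOperations.
Variables (K : rawRing) (R : K -> Prop).

Lemma fsum_mono (P Q : K -> Prop) : subsetK P Q -> subsetK (fsum P) (fsum Q).
Proof. by move=> PQ z; elim=> [|a y /PQ Qa _ IH]; [exact: fsum0|exact: fsumS]. Qed.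

Lemma prodI_mono (A A' B B' : K -> Prop) :
  subsetK A A' -> subsetK B B' -> subsetK (prodI A B) (prodI A' B').
Proof.
by move=> AA' BB'; apply: fsum_mono => _ [a [b [/AA' ? /BB' ? ->]]]; exists a, b.
Qed.

Lemma prodI_ext (A A' B B' : K -> Prop) :
  eqsetK A A' -> eqsetK B B' -> eqsetK (prodI A B) (prodI A' B').
Proof. by move=> eA eB z; split; apply: prodI_mono => x; rewrite ?eA ?eB. Qed.

Lemma tcl_ext (A B : K -> Prop) : eqsetK A B -> eqsetK (tcl R A) (tcl R B).
Proof.
by move=> eAB x; split=> -[J [fgJ JA vJ]]; exists J; split=> // y /JA /eAB.
Qed.

Lemma is_ideal_ext (I I' : K -> Prop) : eqsetK I I' -> is_ideal R I' -> is_ideal R I.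
Proof.
move=> eI [IR I0 ID IM]; split.
- by move=> x /eI /IR.
- exact/eI.
- by move=> x y /eI Ix /eI Iy; apply/eI/ID.
- by move=> r x Rr /eI Ix; apply/eI/IM.
Qed.

Lemma tcl_colon (A : K -> Prop) u x : colon R A u -> tcl R A x -> R (rmul x u).
Proof. by move=> Au [J [_ JA vJ]]; apply: vJ => i /JA /Au. Qed.

End StarOperations.

Section IntegralRationalFunctions.
Variable k : fieldType.
Local Open Scope quotient_scope.
Local Notation tf := (@FracField.tofrac {poly k}).

Lemma ratfun_repr (f : {fraction {poly k}}) :
  exists p q : {poly k}, q != 0 /\ f = tf p / tf q.
Proof.
elim/quotW: f => x; have x2_0 := denom_ratioP x; exists x.1, x.2; split => //.
rewrite -[x in LHS]Ratio_numden; unlock FracField.tofrac.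
rewrite /GRing.inv /= /GRing.mul /= !piE.
apply/eqmodP; rewrite /= FracField.equivfE !numden_Ratio ?oner_eq0 ?mulr1 ?mul1r //.
by rewrite mulrC.
Qed.

Lemma ratfun_coprime_repr (f : {fraction {poly k}}) :
  exists p q : {poly k}, [/\ q != 0, coprimep p q & f = tf p / tf q].
Proof.
have [p [q [q0 ->]]] := ratfun_repr f.
set g := gcdp p q; have g0 : g != 0 by rewrite gcdp_eq0 negb_and q0 orbT.
have pE : p %/ g * g = p := divpK (dvdp_gcdl p q).
have qE : q %/ g * g = q := divpK (dvdp_gcdr p q).
exists (p %/ g), (q %/ g); split.
- by apply: contraNneq q0 => q'0; rewrite -qE -/g q'0 mul0r.
- by apply: coprimep_div_gcd; rewrite q0 orbT.
- rewrite -[in LHS]pE -[in LHS]qE !rmorphM /= invfM mulrACA divff ?mulr1 //.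
  by rewrite tofrac_eq0.
Qed.

(* [k[X]] is integrally closed: if [p/q] in lowest terms is a root of a monic
   polynomial over [k[X]], clearing denominators gives [q | p^n], so [q] is a
   constant. *)
Lemma integral_ratfun_poly (f : {fraction {poly k}}) (ds : seq {poly k}) :
  foldr (fun d acc => tf d + f * acc) 1 ds = 0 -> exists g : {poly k}, f = tf g.
Proof.
move=> root_f; have [p [q [q0 pq_coprime fE]]] := ratfun_coprime_repr f.
have tq0 : tf q != 0 by rewrite tofrac_eq0.
pose H := fix H ds := if ds is d :: ds' then d * q ^+ (size ds').+1 + p * H ds' else 1.
have HE ds' : tf (H ds') = tf q ^+ size ds' * foldr (fun d acc => tf d + f * acc) 1 ds'.
  elim: ds' => [|d ds' IH] /=; first by rewrite tofrac1 expr0 mulr1.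
  rewrite tofracD !tofracM tofracXn IH; set e := foldr _ 1 ds'.
  rewrite -[tf p](divfK tq0) -fE exprS; ring.
have Hmod ds' : q %| H ds' - p ^+ size ds'.
  elim: ds' => [|d ds' IH] /=; first by rewrite expr0 subrr dvdp0.
  have -> : d * q ^+ (size ds').+1 + p * H ds' - p ^+ (size ds').+1 =
    q * (d * q ^+ size ds') + p * (H ds' - p ^+ size ds') by rewrite !exprS; ring.
  by apply: dvdp_add; [exact: dvdp_mulIl|exact: dvdp_mull].
have H0 : H ds = 0 by apply/eqP; rewrite -tofrac_eq0 HE root_f mulr0.
have q_dvd_pn : q %| p ^+ size ds by move: (Hmod ds); rewrite H0 sub0r dvdpNr.
have : coprimep q q.
  by apply: coprimep_dvdl q_dvd_pn _; apply: coprimep_expr; rewrite coprimep_sym.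
rewrite coprimepp => /size_poly1P [c c0 qE].
exists (p * c^-1%:P); rewrite fE qE tofracM -[tf c^-1%:P]mul1r; congr (_ * _).
apply: (@mulIf _ (tf c%:P)); first by rewrite tofrac_eq0 polyC_eq0.
by rewrite mulVf ?tofrac_eq0 ?polyC_eq0 // -mulrA -tofracM -polyCM mulVf // mulr1.
Qed.

Lemma integral_poly_const (g : {poly k}) (ds : seq k) :
  foldr (fun d acc => d%:P + g * acc) 1 ds = 0 -> (size g <= 1)%N.
Proof.
move=> root_g; rewrite leqNgt; apply/negP => g_big.
have g0 : g != 0 by rewrite -size_poly_eq0 -lt0n (ltn_trans _ g_big).
suff : size (foldr (fun d acc => d%:P + g * acc) 1 ds) = ((size g).-1 * size ds).+1.
  by rewrite root_g size_poly0.
elim: ds {root_g} => [|d ds IH] /=; first by rewrite size_poly1 muln0.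
have acc0 : foldr (fun d acc => d%:P + g * acc) 1 ds != 0 by rewrite -size_poly_eq0 IH.
rewrite addrC size_polyDl size_mul // IH ?mulnS; case: (size g) g_big => // s s_pos /=.
  by rewrite addnS.
by apply: leq_ltn_trans (size_polyC_leq1 d) _; lia.
Qed.

Lemma integral_ratfun_const (f : {fraction {poly k}}) (ds : seq k) :
  foldr (fun d acc => tf d%:P + f * acc) 1 ds = 0 -> exists c : k, f = tf c%:P.
Proof.
move=> root_f; have [g fE] : exists g : {poly k}, f = tf g.
  by apply: (@integral_ratfun_poly f (map polyC ds)); rewrite foldr_map.
suff /size1_polyC gE : (size g <= 1)%N by exists g`_0; rewrite fE {1}gE.
apply: (integral_poly_const (ds := ds)); apply/eqP; rewrite -tofrac_eq0; apply/eqP.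
rewrite -{}root_f {}fE; elim: ds => [|d ds IH] /=; first exact: tofrac1.
by rewrite tofracD tofracM IH.
Qed.

End IntegralRationalFunctions.

Section Model.
Variable k : fieldType.
Local Notation L := (laur (ratfun k)).
Local Notation Y := (YY k : L).
Local Notation X := (XX k : L).
Local Notation C c := (cK k c : L).
Local Notation R := (RR k).
Local Notation M := (MM k).

Lemma raddE (x y : L) : @radd (KK k) x y = x + y. Proof. by []. Qed.
Lemma rmulE (x y : L) : @rmul (KK k) x y = x * y. Proof. by []. Qed.

(* The operations of [KK k] and [laur_add], [laur_mul] are those of the ring [L];
   this exposes them so that [ring] applies. *)
Ltac laur_norm := cbn [rmul radd rzero KK LaurRing]; unfold YY;
  try change (@laur_mul (ratfun k)) with (fun x y : L => x * y);
  try change (@laur_add (ratfun k)) with (fun x y : L => x + y);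
  try change (laur0 (ratfun k)) with (0 : L); cbv beta;
  try match goal with |- @eq _ ?a ?b => change (@eq L a b) end.

Lemma rfCD a b : rfC k (a + b) = rfC k a + rfC k b.
Proof. by rewrite /rfC polyCD rmorphD. Qed.
Lemma rfCM a b : rfC k (a * b) = rfC k a * rfC k b.
Proof. by rewrite /rfC polyCM rmorphM. Qed.
Lemma rfC0 : rfC k 0 = 0.
Proof. by rewrite /rfC rmorph0. Qed.
Lemma rfC1 : rfC k 1 = 1.
Proof. by rewrite /rfC rmorph1. Qed.

Lemma rfX_neq_rfC c : rfX k <> rfC k c.
Proof.
move=> /eqP; rewrite /rfX /rfC tofrac_eq => /eqP/(congr1 (fun p : {poly k} => p`_1)).
by rewrite coefX coefC /= => /eqP; rewrite oner_eq0.
Qed.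

Lemma rfXM_rfC c d : rfX k * rfC k c = rfC k d -> c = 0.
Proof.
rewrite /rfX /rfC -rmorphM => /eqP; rewrite tofrac_eq => /eqP/(congr1 (fun p : {poly k} => p`_1)).
by rewrite coefXM coefC /= coefC.
Qed.

Lemma cK_in_ps c : in_ps (cK k c). Proof. by []. Qed.
Lemma XX_in_ps : in_ps X. Proof. by []. Qed.

Lemma RR_in_ps (x : L) : R x -> in_ps x. Proof. by case. Qed.

Lemma RRD (x y : L) : R x -> R y -> R (x + y).
Proof.
move=> [x0 [c xc]] [y0 [d yd]]; split; first exact: in_psD.
by exists (c + d); rewrite lnum0D // xc yd rfCD.
Qed.

Lemma RRM (x y : L) : R x -> R y -> R (x * y).
Proof.
move=> [x0 [c xc]] [y0 [d yd]]; split; first exact: in_psM.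
by exists (c * d); rewrite lnum0M // xc yd rfCM.
Qed.

Lemma RR0 : R 0. Proof. by split=> //; exists 0; rewrite rfC0. Qed.
Lemma RR1 : R 1. Proof. by split=> //; exists 1; rewrite rfC1. Qed.
Lemma RR_cK c : R (cK k c). Proof. by split=> //; exists c. Qed.

Lemma MM_RR (x : L) : M x -> R x.
Proof. by move=> [x0 x00]; split=> //; exists 0; rewrite x00 rfC0. Qed.

Lemma RR_subC_MM (x : L) c : R x -> lnum x 0%N = rfC k c -> M (x - C c).
Proof.
move=> [x0 _] xc; split; first exact: in_psD.
by rewrite lnum0D // xc; exact: subrr.
Qed.

Lemma RR_XM_MM (x : L) : R x -> R (X * x) -> M x.
Proof.
move=> [x0 [c xc]] [_ [d Xxd]]; split=> //; rewrite xc.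
by move: Xxd; rewrite lnum0M // xc => /rfXM_rfC ->; rewrite rfC0.
Qed.

Definition PSmul (a : L) : KK k -> Prop := fun z => exists2 w, in_ps w & z = a * w.

Lemma MM_PSmulY : eqsetK M (PSmul Y).
Proof. by move=> x; split=> [/in_YPS_mulYP|[w w0 ->]]; last exact: in_YPS_mulY. Qed.

Lemma Rspan_nilP (z : L) : Rspan R [::] z <-> z = 0.
Proof. by []. Qed.

Lemma Rspan_consP (g : L) (gs : seq (KK k)) (z : L) :
  Rspan R (g :: gs) z <-> exists r y : L, [/\ R r, Rspan R gs y & z = r * g + y].
Proof.
by split=> [[r [y [Rr [gs_y ->]]]]|[r [y [Rr gs_y ->]]]]; exists r, y; split.
Qed.

Lemma Rspan_zero (gs : seq (KK k)) : Rspan R gs 0.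
Proof.
elim: gs => [//|g gs IH]; apply/Rspan_consP.
by exists 0, 0; split; [exact: RR0|exact: IH|rewrite mul0r addr0].
Qed.

Lemma Rspan_mem (gs : seq (KK k)) (g : L) : List.In g gs -> Rspan R gs g.
Proof.
elim: gs => [//|h gs IH] [<-|gs_g]; apply/Rspan_consP.
  by exists 1, 0; split; [exact: RR1|exact: Rspan_zero|rewrite mul1r addr0].
by exists 0, g; split; [exact: RR0|exact: IH|rewrite mul0r add0r].
Qed.

Lemma is_ideal_Rspan (gs : seq (KK k)) :
  (forall g, List.In g gs -> R g) -> is_ideal R (Rspan R gs).
Proof.
elim: gs => [|g gs IH] Rgs.
  split=> [_ /Rspan_nilP ->|//|_ _ /Rspan_nilP -> /Rspan_nilP ->|r _ _ /Rspan_nilP ->].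
  - exact: RR0.
  - by apply/Rspan_nilP; rewrite raddE addr0.
  - by apply/Rspan_nilP; rewrite rmulE mulr0.
have [gsR _ gsD gsM] := IH (fun g' h => Rgs g' (or_intror h)).
have Rg : R g by apply: Rgs; left.
split; first 2 last.
- move=> _ _ /Rspan_consP [r [y [Rr gs_y ->]]] /Rspan_consP [r' [y' [Rr' gs_y' ->]]].
  apply/Rspan_consP; exists (r + r'), (y + y'); split; first exact: RRD.
    exact: gsD.
  by rewrite raddE; ring.
- move=> s _ Rs /Rspan_consP [r [y [Rr gs_y ->]]].
  apply/Rspan_consP; exists (s * r), (s * y); split; first exact: RRM.
    exact: gsM.
  by rewrite rmulE; ring.
- by move=> _ /Rspan_consP [r [y [Rr /gsR Ry ->]]]; exact: RRD (RRM Rr Rg) Ry.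
- exact: Rspan_zero.
Qed.

Lemma Rspan_colon (gs : seq (KK k)) (u : L) :
  (forall g, List.In g gs -> R (u * g)) -> colon R (Rspan R gs) u.
Proof.
elim: gs => [|g gs IH] Rugs z; first by move/Rspan_nilP => ->; rewrite rmulE mulr0; exact: RR0.
move=> /Rspan_consP [r [y [Rr gs_y ->]]]; rewrite rmulE mulrDr mulrCA.
apply: RRD; first by apply: RRM => //; apply: Rugs; left.
by apply: IH gs_y => g' ?; apply: Rugs; right.
Qed.

Lemma II_Rspan : eqsetK (II k) (Rspan R (YY k :: laur_mul (XX k) (YY k) :: nil)).
Proof.
move=> z; split.
- move=> [a [b [m [Mm ->]]]]; apply/Rspan_consP; exists (C a + m), (C b * (X * Y)).
  split; first exact: RRD (RR_cK a) (MM_RR Mm).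
    by apply/Rspan_consP; exists (C b), 0; split; [exact: RR_cK| |rewrite addr0].
  by laur_norm; ring.
- move=> /Rspan_consP [r [y [Rr /Rspan_consP [s [y' [Rs /Rspan_nilP -> ->]]] ->]]].
  have [_ [c rc]] := Rr; have [_ [d sd]] := Rs.
  exists c, d, ((r - C c) + (s - C d) * X); split.
    apply: in_YPSD; first exact: RR_subC_MM.
    by apply: in_YPSMr; [exact: RR_subC_MM|exact: XX_in_ps].
  by laur_norm; ring.
Qed.

Lemma JJ_Rspan : eqsetK (JJ k) (Rspan R [:: YY k]).
Proof.
move=> z; split=> [[r [Rr ->]]|/Rspan_consP [r [y [Rr /Rspan_nilP -> ->]]]].
  by apply/Rspan_consP; exists r, 0; split=> //; laur_norm; rewrite addr0 mulrC.
by exists r; split=> //; laur_norm; rewrite addr0 mulrC.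
Qed.

Lemma YY_R : R Y. Proof. by split=> //; exists 0; rewrite rfC0. Qed.

Lemma XY_R : R (X * Y).
Proof. by apply: MM_RR; rewrite mulrC; exact: in_YPS_mulY XX_in_ps. Qed.

Lemma is_ideal_II : is_ideal R (II k).
Proof.
apply: is_ideal_ext II_Rspan _; apply: is_ideal_Rspan => g [<-|[<-|//]].
  exact: YY_R.
exact: XY_R.
Qed.

Lemma is_ideal_JJ : is_ideal R (JJ k).
Proof. by apply: is_ideal_ext JJ_Rspan _; apply: is_ideal_Rspan => g [<-|//]; exact: YY_R. Qed.

Lemma II_mulr (r : L) : R r -> II k (r * Y).
Proof.
have [_ _ _ IIM] := is_ideal_II; move=> Rr; apply: IIM Rr _.
by apply/II_Rspan/Rspan_mem; left.
Qed.

Lemma II_mulrX (r : L) : R r -> II k (r * (X * Y)).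
Proof.
have [_ _ _ IIM] := is_ideal_II; move=> Rr; apply: IIM Rr _.
by apply/II_Rspan/Rspan_mem; right; left.
Qed.

Lemma JJ_sub_II : subsetK (JJ k) (II k).
Proof. by move=> _ [r [Rr ->]]; have := II_mulr Rr; rewrite mulrC. Qed.

Lemma II_sub_PSmulY : subsetK (II k) (PSmul Y).
Proof.
move=> _ [a [b [m [[m0 _] ->]]]]; exists (C a + C b * X + m) => //.
by apply: in_psD m0; apply: in_psD (cK_in_ps a) (in_psM (cK_in_ps b) XX_in_ps).
Qed.

Lemma JJ_neq_MM : ~ eqsetK (JJ k) M.
Proof.
move=> eJM; have : M (Y * X) by exact: in_YPS_mulY XX_in_ps.
move=> /eJM [r [[_ [c rc]] /laurY_mulI XE]].
by apply: (@rfX_neq_rfC c); rewrite -rc -XE.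
Qed.

Lemma tcl_principal (a b : L) : b * a = 1 ->
  eqsetK (tcl R (Rspan R [:: a])) (Rspan R [:: a]).
Proof.
move=> ba x; split=> [tx|ax].
  have colon_b : colon R (Rspan R [:: a]) b.
    by apply: Rspan_colon => _ [<-|//]; rewrite ba; exact: RR1.
  apply/Rspan_consP; exists (x * b), 0; split; [exact: tcl_colon colon_b tx|exact: Rspan_zero|].
  by rewrite -mulrA ba mulr1 addr0.
exists (Rspan R [:: a]); split=> //; first by exists [:: a].
move=> z colon_z; have /Rspan_consP [r [y [Rr /Rspan_nilP -> xE]]] := ax.
have Rza : R (z * a) by apply: colon_z; apply: Rspan_mem; left.
by rewrite rmulE xE addr0 mulrC mulrCA; exact: RRM Rr Rza.
Qed.

Lemma tcl_JJ : eqsetK (tcl R (JJ k)) (JJ k).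
Proof.
move=> x; apply: iff_trans (tcl_ext _ JJ_Rspan x) _.
exact: iff_trans (tcl_principal (mulYinvY _) x) (iff_sym (JJ_Rspan x)).
Qed.

Lemma tcl_PSmul (a u : L) (A : KK k -> Prop) : u * a = Y ->
  subsetK (Rspan R [:: a; X * a]) A -> subsetK A (PSmul a) ->
  eqsetK (tcl R A) (PSmul a).
Proof.
move=> ua gensA A_a x; split=> [tx|[w w0 ->]].
  have colon_u : colon R A u.
    move=> _ /A_a [w w0 ->]; rewrite rmulE mulrA ua; apply: MM_RR.
    exact: in_YPS_mulY w0.
  have colon_uX : colon R A (u * X).
    move=> _ /A_a [w w0 ->]; rewrite rmulE.
    have -> : u * X * (a * w) = u * a * (X * w) by ring.
    by rewrite ua; apply: MM_RR; apply: in_YPS_mulY; apply: in_psM.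
  have /in_YPS_mulYP [w w0 xuE] : M (x * u).
    apply: RR_XM_MM; first exact: tcl_colon colon_u tx.
    have -> : X * (x * u) = x * (u * X) by ring.
    exact: tcl_colon colon_uX tx.
  exists w => //; apply: laurY_mulI; transitivity (x * (u * a)).
    by rewrite ua; laur_norm; ring.
  by rewrite mulrA xuE; laur_norm; ring.
exists (Rspan R [:: a; X * a]); split=> //; first by exists [:: a; X * a].
move=> z colon_z.
have Rza : R (z * a) by apply: colon_z; apply: Rspan_mem; left.
have RzXa : R (z * (X * a)) by apply: colon_z; apply: Rspan_mem; right; left.
have Mza : M (z * a) by apply: RR_XM_MM Rza _; rewrite mulrCA.
by rewrite rmulE mulrC mulrA; apply: MM_RR; exact: in_YPSMr Mza w0.
Qed.

Lemma tcl_II : eqsetK (tcl R (II k)) M.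
Proof.
move=> x; apply: iff_trans _ (iff_sym (MM_PSmulY x)).
have gens_II : subsetK (Rspan R [:: Y; X * Y]) (II k) by move=> z /II_Rspan.
exact: tcl_PSmul (mul1r Y) gens_II II_sub_PSmulY x.
Qed.

Lemma prodII_sub_PSmulYY : subsetK (prodI (II k) (II k)) (PSmul (Y * Y)).
Proof.
move=> z; elim=> [|_ y [i [j [/II_sub_PSmulY [v v0 ->] /II_sub_PSmulY [v' v'0 ->] ->]]] _ [w w0 ->]].
  by exists 0 => //; rewrite mulr0.
exists (v * v' + w); first by apply: in_psD w0; apply: in_psM.
by laur_norm; ring.
Qed.

Lemma Rspan_sub_prodJI : subsetK (Rspan R [:: Y * Y; X * (Y * Y)]) (prodI (JJ k) (II k)).
Proof.
move=> _ /Rspan_consP [r [y [Rr /Rspan_consP [s [y' [Rs /Rspan_nilP -> ->]]] ->]]].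
have JY : JJ k Y by exists 1; split; [exact: RR1|laur_norm; rewrite mulr1].
have -> : r * (Y * Y) + (s * (X * (Y * Y)) + 0) =
    @radd (KK k) (rmul (YY k) (r * Y)) (radd (rmul (YY k) (s * (X * Y))) (rzero (KK k))).
  by laur_norm; ring.
apply: fsumS; first by exists (YY k), (r * Y); split=> //; exact: II_mulr.
apply: fsumS; last exact: fsum0.
by exists (YY k), (s * (X * Y)); split=> //; exact: II_mulrX.
Qed.

Lemma tcl_prodJI_prodII :
  eqsetK (tcl R (prodI (JJ k) (II k))) (tcl R (prodI (II k) (II k))).
Proof.
have JI_II : subsetK (prodI (JJ k) (II k)) (prodI (II k) (II k)).
  by apply: prodI_mono => //; exact: JJ_sub_II.
have uY : laurYinv (ratfun k) * (Y * Y) = Y by rewrite mulrA mulYinvY mul1r.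
move=> x; apply: iff_trans (tcl_PSmul uY Rspan_sub_prodJI _ x) _.
  by move=> z /JI_II /prodII_sub_PSmulYY.
apply: iff_sym; apply: tcl_PSmul uY _ prodII_sub_PSmulYY x.
by move=> z /Rspan_sub_prodJI /JI_II.
Qed.

Lemma prodI_RR_ideal (I : KK k -> Prop) : is_ideal R I -> eqsetK (prodI R I) I.
Proof.
move=> [IR I0 ID IM] x; split.
  by elim=> [|_ y [r [i [Rr Ii ->]]] _ Iy] //; apply: ID => //; apply: IM.
move=> Ix; have -> : x = radd (@rmul (KK k) (1 : L) x) (rzero (KK k)) by laur_norm; ring.
by apply: fsumS; [exists (1 : L), x; split=> //; exact: RR1|exact: fsum0].
Qed.

Lemma JJ_t_reduction_II : t_reduction R (JJ k) (II k).
Proof.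
split; first exact: is_ideal_JJ.
split; first exact: JJ_sub_II.
have IR := prodI_RR_ideal is_ideal_II.
exists 1%N => x; apply: iff_trans (tcl_ext _ (prodI_ext (fun=> iff_refl _) IR) x) _.
apply: iff_trans (tcl_prodJI_prodII x) _.
exact: iff_sym (tcl_ext _ (prodI_ext IR (fun=> iff_refl _)) x).
Qed.

Lemma not_finite_t_basic : ~ finite_t_basic_property R.
Proof.
move=> ftb; apply: JJ_neq_MM => x.
have II_Y : II k Y by have := II_mulr RR1; rewrite mul1r.
have I_fg : fingen R (II k) by exists (YY k :: laur_mul (XX k) (YY k) :: nil); exact: II_Rspan.
have I_nz : nonzero_set (II k) by exists (YY k); split=> //; exact: elimN eqP (laurY_neq0 _).
have eJI := ftb _ is_ideal_II I_nz I_fg _ JJ_t_reduction_II.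
by apply: iff_trans (iff_sym (tcl_JJ x)) _; apply: iff_trans (eJI x) (tcl_II x).
Qed.

Lemma RR_monic_eval (cs : seq (KK k)) (x : L) : in_ps x -> (forall c, List.In c cs -> R c) ->
  in_ps (monic_eval cs x) /\ exists ds : seq k,
    lnum (monic_eval cs x) 0%N = foldr (fun d acc => rfC k d + lnum x 0%N * acc) 1 ds.
Proof.
move=> x0; elim: cs => [|c cs IH] Rcs; first by split=> //; exists [::].
have [c0 [d cd]] : R c by apply: Rcs; left.
have [e0 [ds eE]] := IH (fun c' h => Rcs c' (or_intror h)).
rewrite [monic_eval _ _]/=; laur_norm.
split; first by apply: in_psD c0 _; apply: in_psM.
exists (d :: ds); apply: etrans (lnum0D c0 (in_psM x0 e0)) _.
by rewrite (lnum0M x0 e0) cd eE.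
Qed.

Lemma integrally_closed_RR : integrally_closed R.
Proof.
move=> x [cs [Rcs root_x]]; case: (posnP (lden x)) => [x0|x_neg].
  have [_ [ds lnumE]] := RR_monic_eval x0 Rcs.
  have root0 : foldr (fun d acc => rfC k d + lnum x 0%N * acc) 1 ds = 0.
    by rewrite -lnumE root_x.
  have [c xc] := integral_ratfun_const root0.
  by split=> //; exists c.
have := monic_eval_neq0 x_neg (fun c h => RR_in_ps (Rcs c h)).
by rewrite root_x eqxx.
Qed.

End Model.

Theorem mainTheorem13 (k : fieldType) :
  integrally_closed (RR k) /\
  ~ finite_t_basic_property (RR k) /\
  eqsetK (II k) (Rspan (RR k) (YY k :: laur_mul (XX k) (YY k) :: nil)) /\
  is_ideal (RR k) (II k) /\ is_ideal (RR k) (JJ k) /\ subsetK (JJ k) (II k) /\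
  eqsetK (tcl (RR k) (prodI (JJ k) (II k))) (tcl (RR k) (prodI (II k) (II k))) /\
  eqsetK (tcl (RR k) (JJ k)) (JJ k) /\
  ~ eqsetK (JJ k) (MM k) /\
  eqsetK (tcl (RR k) (II k)) (MM k).
Proof.
split; first exact: integrally_closed_RR.
split; first exact: not_finite_t_basic.
split; first exact: II_Rspan.
split; first exact: is_ideal_II.
split; first exact: is_ideal_JJ.
split; first exact: JJ_sub_II.
split; first exact: tcl_prodJI_prodII.
split; first exact: tcl_JJ.
split; first exact: JJ_neq_MM.
exact: tcl_II.
Qed.
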